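(* Let $f:\mathbb{R}^n\to\mathbb{R}\cup\{+\infty\}$ be a polyhedral M-convex function with bounded $\operatorname{dom}_{\mathbb{R}} f$, $y\in\operatorname{dom}_{\mathbb{R}} f$, and $i,j,k\in N$ pairwise distinct. For every $\lambda>0$ with $\hat y:=y+\lambda(\chi_i-\chi_k)\in\operatorname{dom}_{\mathbb{R}} f$, we have $f'_{\mathbb{R}}(\hat y;i,j)\ge f'_{\mathbb{R}}(y;i,j)$. In particular, if $f'_{\mathbb{R}}(y;i,j)>\phi_{\mathbb{R}}(y)$ then $f'_{\mathbb{R}}(\hat y;i,j)>\phi_{\mathbb{R}}(y)$.
   Context: $N=\{1,\dots,n\}$; $\chi_i$ is the $i$-th unit vector. $\operatorname{dom}_{\mathbb{R}} f=\{x\in\mathbb{R}^n:f(x)<+\infty\}$. A polyhedral convex function $f:\mathbb{R}^n\to\mathbb{R}\cup\{+\infty\}$ (epigraph a polyhedron, $\operatorname{dom}_{\mathbb{R}} f\neq\emptyset$) is M-convex if for all $x,y\in\operatorname{dom}_{\mathbb{R}} f$ and every $i$ with $x(i)>y(i)$ there exist $j$ with $x(j)<y(j)$ and $\epsilon_0>0$ such that $f(x)+f(y)\ge f(x-\epsilon(\chi_i-\chi_j))+f(y+\epsilon(\chi_i-\chi_j))$ for all $\epsilon\in[0,\epsilon_0]$. For $x\in\operatorname{dom}_{\mathbb{R}} f$, $f'_{\mathbb{R}}(x;i,j)=\lim_{\alpha\downarrow0}(f(x+\alpha(\chi_i-\chi_j))-f(x))/\alpha$ (possibly $+\infty$), and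 $\phi_{\mathbb{R}}(x)=\min_{i,j\in N}f'_{\mathbb{R}}(x;i,j)$. *)

From HB Require Import structures.
From mathcomp Require Import all_boot all_order all_algebra.
From mathcomp Require Import all_classical all_reals all_analysis.
Set Implicit Arguments. Unset Strict Implicit. Unset Printing Implicit Defensive.
Import Order.TTheory GRing.Theory Num.Theory.
Import numFieldNormedType.Exports.
Local Open Scope classical_set_scope.
Local Open Scope ring_scope.

Definition chi {R : realType} {n : nat} (i : 'I_n) : 'I_n -> R :=
  fun l => (l == i)%:R.

Definition move {R : realType} {n : nat} (x : 'I_n -> R) (a : R) (i j : 'I_n)
  : 'I_n -> R := fun l => x l + a * (chi i l - chi j l).

Definition domR {R : realType} {n : nat} (f : ('I_n -> R) -> \bar R) :=
  [set x | (f x < +oo)%E].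

Definition polyhedron {R : realType} {n : nat} (P : set (('I_n -> R) * R)) :=
  exists (m : nat) (a : 'I_m -> 'I_n -> R) (c b : 'I_m -> R),
    P = [set p | forall l : 'I_m, \sum_(q < n) a l q * p.1 q + c l * p.2 <= b l].

Definition epigraph {R : realType} {n : nat} (f : ('I_n -> R) -> \bar R) :=
  [set p : ('I_n -> R) * R | (f p.1 <= p.2%:E)%E].

Definition polyhedral_convex {R : realType} {n : nat} (f : ('I_n -> R) -> \bar R) :=
  (forall x, f x != -oo%E) /\ polyhedron (epigraph f) /\ domR f !=set0.

Definition Mconvex {R : realType} {n : nat} (f : ('I_n -> R) -> \bar R) :=
  polyhedral_convex f /\
  forall x y, domR f x -> domR f y -> forall i : 'I_n, y i < x i ->
    exists j : 'I_n, x j < y j /\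
      exists2 e0 : R, 0 < e0 & forall e : R, 0 <= e <= e0 ->
        (f (move x (- e) i j) + f (move y e i j) <= f x + f y)%E.

Definition dirder {R : realType} {n : nat} (f : ('I_n -> R) -> \bar R)
  (x : 'I_n -> R) (i j : 'I_n) : \bar R :=
  lim ((fun alpha : R => ((f (move x alpha i j) - f x) * (alpha^-1)%:E)%E)
        @ 0^'+).

Definition phiR {R : realType} {n : nat} (f : ('I_n -> R) -> \bar R)
  (x : 'I_n -> R) : \bar R :=
  \big[mine/+oo%E]_(p : 'I_n * 'I_n) dirder f x p.1 p.2.

Definition bounded_dom {R : realType} {n : nat} (f : ('I_n -> R) -> \bar R) :=
  exists M : R, forall x, domR f x -> forall l, `|x l| <= M.

From HB Require Import structures.
From mathcomp Require Import all_boot all_order all_algebra.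
From mathcomp Require Import all_classical all_reals all_analysis.
From mathcomp Require Import ring lra.
Import Order.TTheory GRing.Theory Num.Theory.
Local Open Scope classical_set_scope.
Local Open Scope ring_scope.
Set Implicit Arguments. Unset Strict Implicit. Unset Printing Implicit Defensive.

(* On its domain, which is cut out by finitely many half-spaces, a polyhedral
   f is the maximum of finitely many affine pieces.  Hence f'(x; i, j) is +oo
   when chi_i - chi_j leaves the domain through a tight facet, and otherwise it
   is the largest slope in that direction of a piece active at x.
   Along z_t = y + t (chi_i - chi_k) the active facets and pieces can only
   shrink near a point, so t |-> f'(z_t; i, j) is upper semicontinuous, which
   is the step from the left.  The step to the right needs, at every z_t, an
   active piece maximizing the slopes towards j and towards k at once, and a
   facet blocking i -> j that is parallel to chi_i - chi_k.  Otherwise a small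
   positive mixture of the two directions yields a point whose M-convex
   exchange with z_t contradicts the maximality of one of the slopes.  A
   supremum argument turns the two local steps into monotonicity on
   [0, lambda]. *)

Lemma small_perturbation_lt0 (R : realType) (I : finType) (P : pred I) (u v : I -> R) :
  (forall l, P l -> u l < 0) ->
  exists2 eta, 0 < eta & forall s, `|s| < eta -> forall l, P l -> u l + s * v l < 0.
Proof.
move=> u_lt0.
pose e l := - u l / (1 + `|v l|).
have e_gt0 l : P l -> 0 < e l.
  by move=> Pl; rewrite divr_gt0 ?oppr_gt0 ?u_lt0 // ltr_pwDl.
exists (\big[Num.min/1]_(l | P l) e l); first exact: lt_bigmin.
move=> s s_lt l Pl.
have s_e : `|s| < e l by apply: lt_le_trans s_lt (bigmin_le_cond _ _ Pl).
have : `|s| * (1 + `|v l|) < - u l by rewrite -ltr_pdivlMr ?ltr_pwDl.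
have : s * v l <= `|s| * `|v l| by rewrite -normrM ler_norm.
have := normr_ge0 s; nra.
Qed.

Lemma real_induction_le (R : realType) (disp : Order.disp_t) (T : porderType disp)
    (D : R -> T) (lam : R) : 0 < lam ->
  (forall t0, 0 <= t0 -> t0 < lam -> exists2 eta, 0 < eta &
     forall t, t0 < t -> t < t0 + eta -> (D t0 <= D t)%O) ->
  (forall t0, 0 < t0 -> t0 <= lam -> exists2 eta, 0 < eta &
     forall t, t0 - eta < t -> t < t0 -> 0 <= t -> (D t <= D t0)%O) ->
  (D 0 <= D lam)%O.
Proof.
move=> lam_gt0 right_step left_step.
pose S := [set tau | 0 <= tau <= lam /\ forall u, 0 <= u <= tau -> (D 0 <= D u)%O].
have S0 : S 0.
  split=> [|u /andP[u_ge0 u_le0]]; first by rewrite lexx ltW.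
  by have -> : u = 0 by apply/le_anti; rewrite u_ge0 u_le0.
have supS : has_sup S by split; [exists 0 | exists lam => tau [/andP[]]].
set s := sup S.
have s_ge0 : 0 <= s by apply: sup_upper_bound.
have s_le : s <= lam by apply: ge_sup; [exists 0 | move=> tau [/andP[]]].
have below u : 0 <= u -> u < s -> (D 0 <= D u)%O.
  move=> u_ge0 u_lt; have su_gt0 : 0 < s - u by rewrite subr_gt0.
  have [tau [_ Stau] tau_gt] := sup_adherent su_gt0 supS.
  by apply: Stau; rewrite u_ge0 /=; rewrite -/s in tau_gt; lra.
have at_s : (D 0 <= D s)%O.
  have [<-|s_gt0] := eqVneq 0 s; first exact: lexx.
  have {}s_gt0 : 0 < s by rewrite lt_neqAle s_gt0.
  have [eta eta_gt0 step] := left_step s s_gt0 s_le.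
  pose u := Num.max (s / 2) (s - eta / 2).
  have u1 : s / 2 <= u by rewrite le_max lexx.
  have u2 : s - eta / 2 <= u by rewrite le_max lexx orbT.
  have u_lt : u < s by rewrite gt_max; apply/andP; split; lra.
  by apply: le_trans (below u _ u_lt) (step u _ u_lt _); lra.
have Ss : S s.
  split=> [|u /andP[u_ge0]]; first by rewrite s_ge0.
  by rewrite [u <= s]le_eqVlt => /orP[/eqP->|]; [exact: at_s | exact: below].
have [<-|s_lt] := eqVneq s lam; first by case: Ss => _; apply; rewrite s_ge0 lexx.
have {}s_lt : s < lam by rewrite lt_neqAle s_lt.
have [eta eta_gt0 step] := right_step s s_ge0 s_lt.
pose tau := Num.min lam (s + eta / 2).
have t1 : tau <= lam by rewrite ge_min lexx.
have t2 : tau <= s + eta / 2 by rewrite ge_min lexx orbT.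
have t3 : s < tau by rewrite lt_min; apply/andP; split; lra.
suff : S tau by move/(sup_upper_bound supS); rewrite -/s => tau_le; exfalso; lra.
split=> [|u /andP[u_ge0 u_le]]; first by rewrite t1 (le_trans s_ge0 (ltW t3)).
have [u_le_s|s_lt_u] := leP u s; first by case: Ss => _; apply; rewrite u_ge0.
by apply: le_trans at_s (step u s_lt_u _); lra.
Qed.

Lemma mixture_splits_argmax (R : realType) (I : finType) (A : pred I) (u v : I -> R)
    (lu lv : I) :
  A lu -> (forall l, A l -> u l <= u lu) ->
  A lv -> (forall l, A l -> v l <= v lv) ->
  (forall l, A l -> u l = u lu -> v l < v lv) ->
  exists p q, [/\ 0 < p, 0 < q,
    exists2 l1, A l1 /\ (forall l, A l -> p * u l + q * v l <= p * u l1 + q * v l1)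
      & u l1 < u lu &
    exists2 l2, A l2 /\ (forall l, A l -> p * u l + q * v l <= p * u l2 + q * v l2)
      & v l2 < v lv].
Proof.
move=> Alu lu_max Alv lv_max no_common.
have [la /andP[Ala /eqP ula] la_max] :=
  @arg_maxP _ _ _ lu [pred l | A l && (u l == u lu)] v (introT andP (conj Alu (eqxx _))).
have [lb /andP[Alb /eqP vlb] lb_max] :=
  @arg_maxP _ _ _ lv [pred l | A l && (v l == v lv)] u (introT andP (conj Alv (eqxx _))).
have vla : v la < v lv by apply: no_common.
have ulb : u lb < u lu.
  rewrite lt_neqAle lu_max // andbT; apply/eqP => ulb.
  by have := no_common lb Alb ulb; rewrite vlb ltxx.
(* With these weights [la] and [lb] tie for [p * u + q * v]. *)
pose p := v lv - v la; pose q := u lu - u lb.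
have p_gt0 : 0 < p by rewrite subr_gt0.
have q_gt0 : 0 < q by rewrite subr_gt0.
pose w l := p * u l + q * v l.
have w_ab : w la = w lb by rewrite /w ula vlb /p /q; ring.
have [lc Alc lc_max] := arg_maxP w Alu.
exists p, q; split => //.
- have [ulc|ulc] := ltP (u lc) (u lu); first by exists lc.
  have uc : u lc = u lu by apply/le_anti; rewrite lu_max.
  have vc : v lc <= v la by apply: la_max; rewrite /= Alc uc eqxx.
  exists lb => //; split=> // l Al; apply: le_trans (lc_max l Al) _.
  have : w lc <= w la by rewrite /w uc ula lerD2l ler_pM2l.
  by rewrite w_ab.
- have [vlc|vlc] := ltP (v lc) (v lv); first by exists lc.
  have vc : v lc = v lv by apply/le_anti; rewrite lv_max.
  have uc : u lc <= u lb by apply: lb_max; rewrite /= Alc vc eqxx.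
  exists la => //; split=> // l Al; apply: le_trans (lc_max l Al) _.
  have : w lc <= w lb by rewrite /w vc vlb lerD2r ler_pM2l.
  by rewrite -w_ab.
Qed.

Section PolyhedralFunction.
Variables (R : realType) (n m : nat) (f : ('I_n -> R) -> \bar R).
Variables (a : 'I_m -> 'I_n -> R) (c b : 'I_m -> R).

(* Rows with [c l = 0] are the facets of dom f, rows with [c l < 0] give the
   affine pieces of f; [c l > 0] cannot occur (see [c_eq0_or_lt0]). *)
Definition row l (x : 'I_n -> R) := \sum_(q < n) a l q * x q.
Definition piece l (x : 'I_n -> R) := (b l - row l x) / c l.
Definition rate (d : 'I_m -> R) l := - d l / c l.
Definition slope (i j : 'I_n) := rate (fun l => a l i - a l j).

Definition tight x l := (c l == 0) && (row l x == b l).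
Definition active x l := (c l < 0) && ((piece l x)%:E == f x).

Definition affine_rows (x : 'I_n -> R) (X : R -> 'I_n -> R) (d : 'I_m -> R) :=
  forall s l, row l (X s) = row l x + s * d l.

Lemma row_move l x s i j : row l (move x s i j) = row l x + s * (a l i - a l j).
Proof.
rewrite /row /move; under eq_bigr do rewrite mulrDr mulrCA mulrBr.
rewrite big_split /= -mulr_sumr sumrB; congr (_ + _ * (_ - _)).
  by rewrite (bigD1 i) //= /chi eqxx mulr1 big1 ?addr0 // => q /negbTE ->; rewrite mulr0.
by rewrite (bigD1 j) //= /chi eqxx mulr1 big1 ?addr0 // => q /negbTE ->; rewrite mulr0.
Qed.

Lemma affine_rows_move x i j :
  affine_rows x (fun s => move x s i j) (fun l => a l i - a l j).
Proof. by move=> s l; apply: row_move. Qed.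

Lemma piece_affine x X d : affine_rows x X d ->
  forall s l, piece l (X s) = piece l x + s * rate d l.
Proof. by move=> Xrows s l; rewrite /piece /rate Xrows; ring. Qed.

Lemma piece_move l x s i j : piece l (move x s i j) = piece l x + s * slope i j l.
Proof. exact: (piece_affine (affine_rows_move x i j)). Qed.

Lemma not_domR_eqy x : ~ domR f x -> f x = +oo%E.
Proof. by move=> ndx; apply/eqP; rewrite eq_le leey /= leNgt; apply/negP. Qed.

Hypothesis f_neqNy : forall x, f x != -oo%E.
Hypothesis epigraph_f :
  epigraph f = [set p | forall l, row l p.1 + c l * p.2 <= b l].
Hypothesis domR_f_neq0 : domR f !=set0.

Lemma domR_fin x : domR f x -> exists r, f x = r%:E.
Proof. by rewrite /domR /=; move: (f_neqNy x); case: (f x) => // r _ _; exists r. Qed.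

Lemma le_fE x r : (f x <= r%:E)%E <-> (forall l, row l x + c l * r <= b l).
Proof. by have := congr1 (fun S => S (x, r)) epigraph_f; rewrite /epigraph /= => ->. Qed.

Lemma c_eq0_or_lt0 l : c l = 0 \/ c l < 0.
Proof.
have [x0 dx0] := domR_f_neq0; have [r fx0] := domR_fin dx0.
have [cl_gt0|] := ltP 0 (c l); last by rewrite le_eqVlt => /orP[/eqP|]; [left|right].
pose T := Num.max r ((b l - row l x0 + 1) / c l).
have /le_fE /(_ l) : (f x0 <= T%:E)%E by rewrite fx0 lee_fin le_max lexx.
have : (b l - row l x0 + 1) / c l <= T by rewrite le_max lexx orbT.
by rewrite ler_pdivrMr // mulrC; lra.
Qed.

Lemma epi_le_piece l x r : c l < 0 -> (row l x + c l * r <= b l) <-> (piece l x <= r).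
Proof. by move=> cl; rewrite /piece ler_ndivrMr // mulrC; split=> ?; lra. Qed.

Lemma le_f_piece x V : (forall l, c l = 0 -> row l x <= b l) ->
  (forall l, c l < 0 -> piece l x <= V) -> (f x <= V%:E)%E.
Proof.
move=> rows_le pieces_le; apply/le_fE => l.
have [cl0|cl_lt0] := c_eq0_or_lt0 l; first by rewrite cl0 mul0r addr0 rows_le.
exact/(epi_le_piece _ _ cl_lt0)/pieces_le.
Qed.

Lemma domRP x : domR f x <-> (forall l, c l = 0 -> row l x <= b l).
Proof.
split=> [/domR_fin[r fx] l cl0 | rows_le].
  have /le_fE /(_ l) : (f x <= r%:E)%E by rewrite fx.
  by rewrite cl0 mul0r addr0.
pose V := \big[Num.max/0]_(l | c l < 0) piece l x.
have : (f x <= V%:E)%E by apply: le_f_piece => // l; exact: le_bigmax_cond.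
by move/le_lt_trans; apply; rewrite ltey.
Qed.

Lemma piece_le_f l x : c l < 0 -> ((piece l x)%:E <= f x)%E.
Proof.
move=> cl; case fx: (f x) (f_neqNy x) => [r| |] // _; last exact: leey.
by rewrite lee_fin -(epi_le_piece _ _ cl) ((le_fE x r).1 _ l) // fx.
Qed.

Lemma activeP x l : active x l -> c l < 0 /\ f x = (piece l x)%:E.
Proof. by case/andP => ? /eqP. Qed.

Lemma active_domR x l : active x l -> domR f x.
Proof. by case/activeP => _ fx; rewrite /domR /= fx ltey. Qed.

Lemma active_of_max x l0 : domR f x -> c l0 < 0 ->
  (forall l, c l < 0 -> piece l x <= piece l0 x) -> active x l0.
Proof.
move=> /domRP dx cl0 l0_max; rewrite /active cl0 eq_le piece_le_f //=.
exact: le_f_piece.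
Qed.

Lemma exists_active x : domR f x -> exists l, active x l.
Proof.
move=> dx; have [r fx] := domR_fin dx.
have [l cl_lt0|no_piece] := pickP (fun l => c l < 0).
  have [l0 cl0 l0_max] :=
    @arg_maxP _ _ _ l (fun l => c l < 0) (fun l => piece l x) cl_lt0.
  by exists l0; apply: active_of_max.
have : (f x <= (r - 1)%:E)%E by apply: le_f_piece => [|l]; [exact/domRP | rewrite no_piece].
by rewrite fx lee_fin; lra.
Qed.

Lemma domR_segment y i k lam t : domR f y -> domR f (move y lam i k) ->
  0 <= t <= lam -> domR f (move y t i k).
Proof.
move=> /domRP dy /domRP dlam /andP[t_ge0 t_le]; apply/domRP => l cl0.
move: (dy l cl0) (dlam l cl0); rewrite !row_move.
have [d_le0|d_gt0] := leP (a l i - a l k) 0.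
  by have := mulr_ge0_le0 t_ge0 d_le0; lra.
by have := ler_wpM2r (ltW d_gt0) t_le; lra.
Qed.

Lemma slack_near x X d : affine_rows x X d -> domR f x ->
  exists2 eta, 0 < eta & forall s l, `|s| < eta -> c l = 0 -> ~~ tight x l ->
    row l (X s) < b l.
Proof.
move=> Xrows /domRP dx.
have [eta eta_gt0 perturb] :=
  @small_perturbation_lt0 _ _ (fun l => (c l == 0) && (row l x < b l))
    (fun l => row l x - b l) d ltac:(by move=> l /andP[_]; rewrite subr_lt0).
exists eta => // s l s_lt cl0 ntight.
have slack : row l x < b l.
  rewrite lt_neqAle dx // andbT.
  by apply: contraNneq ntight => rowl; rewrite /tight cl0 rowl !eqxx.
by rewrite Xrows; have := perturb s s_lt l; rewrite /= cl0 eqxx slack => /(_ isT); lra.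
Qed.

Lemma inactive_near x X d l0 : affine_rows x X d -> active x l0 ->
  exists2 eta, 0 < eta & forall s l, `|s| < eta -> c l < 0 -> ~~ active x l ->
    piece l (X s) < piece l0 (X s).
Proof.
move=> Xrows /activeP[cl0 fx].
have [eta eta_gt0 perturb] :=
  @small_perturbation_lt0 _ _ (fun l => (c l < 0) && (piece l x < piece l0 x))
    (fun l => piece l x - piece l0 x) (fun l => rate d l - rate d l0)
    ltac:(by move=> l /andP[_]; rewrite subr_lt0).
exists eta => // s l s_lt cl_lt0 inactive.
have lt_l0 : piece l x < piece l0 x.
  rewrite lt_neqAle -lee_fin -fx piece_le_f // andbT.
  by apply: contraNneq inactive => eq_l; rewrite /active cl_lt0 fx eq_l eqxx.
have := perturb s s_lt l; rewrite /= cl_lt0 lt_l0 => /(_ isT).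
by rewrite !(piece_affine Xrows) mulrBr; lra.
Qed.

Lemma domR_ray x X d : affine_rows x X d -> domR f x ->
  (forall l, tight x l -> d l <= 0) ->
  exists2 eta, 0 < eta & forall s, 0 <= s -> s < eta -> domR f (X s).
Proof.
move=> Xrows dx d_le0; have [eta eta_gt0 slack] := slack_near Xrows dx.
exists eta => // s s_ge0 s_lt; apply/domRP => l cl0.
have [tl|ntl] := boolP (tight x l); last by apply/ltW/slack; rewrite ?ger0_norm.
have := mulr_ge0_le0 s_ge0 (d_le0 l tl); move: tl => /andP[_ /eqP].
by rewrite Xrows; lra.
Qed.

Lemma active_ray x X d l0 : affine_rows x X d -> (forall l, tight x l -> d l <= 0) ->
  active x l0 -> (forall l, active x l -> rate d l <= rate d l0) ->
  exists2 eta, 0 < eta & forall s, 0 <= s -> s < eta -> active (X s) l0.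
Proof.
move=> Xrows d_le0 act0 l0_max.
have [eta1 eta1_gt0 dom_ray] := domR_ray Xrows (active_domR act0) d_le0.
have [eta2 eta2_gt0 inactive] := inactive_near Xrows act0.
exists (Num.min eta1 eta2) => [|s s_ge0]; first by rewrite lt_min eta1_gt0.
rewrite lt_min => /andP[s1 s2]; have [cl0 fx] := activeP act0.
apply: active_of_max => // [|l cl_lt0]; first exact: dom_ray.
have [actl|inactl] := boolP (active x l); last first.
  by apply/ltW/inactive; rewrite ?ger0_norm.
have [_ fxl] := activeP actl.
have eq_l : piece l x = piece l0 x by apply/EFin_inj; rewrite -fx -fxl.
rewrite !(piece_affine Xrows) eq_l lerD2l.
by rewrite ler_wpM2l // l0_max.
Qed.

Lemma blockedP x i j :
  (exists2 l, tight x l & a l j < a l i) \/ (forall l, tight x l -> a l i <= a l j).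
Proof.
have [l /andP[tl lt]|unblocked] := pickP (fun l => tight x l && (a l j < a l i)).
  by left; exists l.
by right=> l tl; rewrite leNgt; apply/negP => lt; move: (unblocked l); rewrite tl lt.
Qed.

Lemma dirder_blocked x i j l : domR f x -> tight x l -> a l j < a l i ->
  dirder f x i j = +oo%E.
Proof.
move=> dx /andP[/eqP cl0 /eqP rowl] lt_ji; have [r fx] := domR_fin dx.
rewrite /dirder; apply: lim_near_cst; first exact: ereal_hausdorff.
near=> s; have s_gt0 : 0 < s by near: s; exact: nbhs_right_gt.
have -> : f (move x s i j) = +oo%E.
  apply: not_domR_eqy => /domRP /(_ l cl0); rewrite row_move rowl.
  have : 0 < s * (a l i - a l j) by rewrite mulr_gt0 ?subr_gt0.
  lra.
by rewrite fx addye // gt0_mulye // lte_fin invr_gt0.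
Unshelve. all: by end_near.
Qed.

Lemma dirder_max_slope x i j l0 : (forall l, tight x l -> a l i <= a l j) ->
  active x l0 -> (forall l, active x l -> slope i j l <= slope i j l0) ->
  dirder f x i j = (slope i j l0)%:E.
Proof.
move=> unblocked act0 l0_max.
have [eta eta_gt0 act_ray] := active_ray (affine_rows_move x i j)
  ltac:(by move=> l /unblocked; rewrite subr_le0) act0 l0_max.
rewrite /dirder; apply: lim_near_cst; first exact: ereal_hausdorff.
near=> s; have s_gt0 : 0 < s by near: s; exact: nbhs_right_gt.
have s_lt : s < eta by near: s; exact: nbhs_right_lt.
have [_ fxs] := activeP (act_ray s (ltW s_gt0) s_lt).
have [_ fx] := activeP act0.
rewrite fxs fx piece_move -EFinB -EFinM; congr EFin.
by rewrite addrC addKr mulrAC divff ?mul1r // gt_eqF.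
Unshelve. all: by end_near.
Qed.

Lemma slope_le_dirder x i j l : active x l -> ((slope i j l)%:E <= dirder f x i j)%E.
Proof.
move=> actl; have [[l' tl' lt]|unblocked] := blockedP x i j.
  by rewrite (dirder_blocked (active_domR actl) tl' lt) leey.
have [l0 act0 l0_max] := @arg_maxP _ _ _ l (active x) (slope i j) actl.
by rewrite (dirder_max_slope unblocked act0 l0_max) lee_fin; exact: l0_max.
Qed.

Lemma dirder_affine_le x X d i j : affine_rows x X d -> domR f x ->
  exists2 eta, 0 < eta & forall s, `|s| < eta -> domR f (X s) ->
    (dirder f (X s) i j <= dirder f x i j)%E.
Proof.
move=> Xrows dx; have [[l tl lt]|unblocked] := blockedP x i j.
  by exists 1 => // s _ _; rewrite (dirder_blocked dx tl lt) leey.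
have [l0 act0] := exists_active dx.
have [eta1 eta1_gt0 slack] := slack_near Xrows dx.
have [eta2 eta2_gt0 inactive] := inactive_near Xrows act0.
exists (Num.min eta1 eta2) => [|s]; first by rewrite lt_min eta1_gt0.
rewrite lt_min => /andP[s1 s2] dXs.
have tight_x l : tight (X s) l -> tight x l.
  case/andP => /eqP cl0 /eqP rowl; apply: contraT => ntl.
  by have := slack s l s1 cl0 ntl; rewrite rowl ltxx.
have active_x l : active (X s) l -> active x l.
  case/activeP => cl fXs; apply: contraT => inact.
  have := inactive s l s2 cl inact; have := piece_le_f (X s) (activeP act0).1.
  by rewrite fXs lee_fin; lra.
have [l1 act1] := exists_active dXs.
have [l2 act2 l2_max] := @arg_maxP _ _ _ l1 (active (X s)) (slope i j) act1.
rewrite (dirder_max_slope _ act2 l2_max); last by move=> l /tight_x /unblocked.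
exact/slope_le_dirder/active_x.
Qed.

Lemma dirder_left_step y i j k lam t0 : domR f y -> domR f (move y lam i k) ->
  0 < t0 -> t0 <= lam ->
  exists2 eta, 0 < eta & forall t, t0 - eta < t -> t < t0 -> 0 <= t ->
    (dirder f (move y t i k) i j <= dirder f (move y t0 i k) i j)%E.
Proof.
move=> dy dlam t0_gt0 t0_le; pose X s := move y (t0 + s) i k.
have Xrows : affine_rows (move y t0 i k) X (fun l => a l i - a l k).
  by move=> s l; rewrite !row_move; ring.
have [|eta eta_gt0 usc] := dirder_affine_le i j Xrows (domR_segment dy dlam _).
  by rewrite ltW.
exists eta => // t t_gt t_lt t_ge0.
have Xt : move y t i k = X (t - t0) by rewrite /X addrC subrK.
rewrite Xt; apply: usc; first by rewrite ltr0_norm ?subr_lt0 //; lra.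
by rewrite -Xt; apply: domR_segment dy dlam _; rewrite t_ge0; lra.
Qed.

Lemma domR_exchange w1 w2 x y : (f w1 + f w2 <= f x + f y)%E ->
  domR f x -> domR f y -> domR f w1 /\ domR f w2.
Proof.
move=> le dx dy; have [r1 fx] := domR_fin dx; have [r2 fy] := domR_fin dy.
move: le; rewrite fx fy -EFinD => le.
split; apply: contrapT => /not_domR_eqy fw; move: le; rewrite fw.
  by rewrite addye // leNgt ltey.
by rewrite addey // leNgt ltey.
Qed.

Lemma exchange_slope_le X z l lz i j e : active X l -> active z lz -> 0 < e ->
  (f (move X (- e) i j) + f (move z e i j) <= f X + f z)%E ->
  slope i j lz <= slope i j l.
Proof.
move=> /activeP[cl fX] /activeP[clz fz] e_gt0 exch.
have : (((piece l X - e * slope i j l) + (piece lz z + e * slope i j lz))%:E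
    <= f X + f z)%E.
  apply: le_trans exch; rewrite EFinD leeD //.
    by rewrite -mulNr -piece_move piece_le_f.
  by rewrite -piece_move piece_le_f.
rewrite fX fz -EFinD lee_fin => le.
by rewrite -(ler_pM2l e_gt0); lra.
Qed.

Section Exchange.
Hypothesis exchange_f : forall x y, domR f x -> domR f y -> forall i : 'I_n, y i < x i ->
  exists j : 'I_n, x j < y j /\
    exists2 e0 : R, 0 < e0 & forall e : R, 0 <= e <= e0 ->
      (f (move x (- e) i j) + f (move y e i j) <= f x + f y)%E.
Variables i j k : 'I_n.
Hypotheses (neq_ij : i != j) (neq_ik : i != k).

Definition mix (z : 'I_n -> R) (p q : R) := move (move z p i j) q i k.

Lemma row_mix l z p q :
  row l (mix z p q) = row l z + p * (a l i - a l j) + q * (a l i - a l k).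
Proof. by rewrite !row_move. Qed.

Lemma exchange_mix z p q : 0 <= p -> 0 <= q -> 0 < p + q ->
  domR f z -> domR f (mix z p q) ->
  exists2 e, 0 < e &
    (f (move (mix z p q) (- e) i j) + f (move z e i j) <= f (mix z p q) + f z)%E \/
    (f (move (mix z p q) (- e) i k) + f (move z e i k) <= f (mix z p q) + f z)%E.
Proof.
move=> p_ge0 q_ge0 pq_gt0 dz dX.
have mixE l : mix z p q l = z l + p * (chi i l - chi j l) + q * (chi i l - chi k l).
  by [].
have zi_lt : z i < mix z p q i.
  by rewrite mixE /chi eqxx (negbTE neq_ij) (negbTE neq_ik) /= !subr0 !mulr1; lra.
have [j' [lt_j' [e e_gt0 exch]]] := exchange_f dX dz zi_lt.
exists e => //; have {exch} := exch e; rewrite lexx ltW // => /(_ isT) exch.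
have [eq_j | nj] := eqVneq j' j; first by left; rewrite -eq_j.
have [eq_k | nk] := eqVneq j' k; first by right; rewrite -eq_k.
exfalso; move: lt_j'; rewrite mixE /chi (negbTE nj) (negbTE nk).
by have [->|ni] := eqVneq j' i; rewrite ?eqxx ?(negbTE ni) /=; lra.
Qed.

Lemma blocked_parallel z : domR f z -> (forall l, tight z l -> a l i <= a l k) ->
  (exists2 l, tight z l & a l j < a l i) ->
  exists2 l, tight z l & a l j < a l i /\ a l i = a l k.
Proof.
move=> dz ik_free [l1 tl1 lt1]; apply: contrapT => no_parallel.
(* The smallest ratio keeps the facet [ls] tight along the mixed direction and
   every other tight facet satisfied. *)
pose rho l := (a l k - a l i) / (a l i - a l j).
have [ls /andP[tls lts] ls_min] :=
  @arg_minP _ _ _ l1 [pred l | tight z l && (a l j < a l i)] rho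
    (introT andP (conj tl1 lt1)).
have /andP[/eqP cls /eqP rowls] := tls.
have lt_ik : a ls i < a ls k.
  rewrite lt_neqAle ik_free // andbT.
  by apply/eqP => eq_ik; apply: no_parallel; exists ls.
have rho_ge0 : 0 <= rho ls by rewrite divr_ge0 // subr_ge0 ltW.
have rhoE : rho ls * (a ls i - a ls j) = a ls k - a ls i.
  by rewrite divfK // subr_eq0 gt_eqF.
pose d l := rho ls * (a l i - a l j) + (a l i - a l k).
have Xrows : affine_rows z (fun s => mix z (s * rho ls) s) d.
  by move=> s l; rewrite row_mix /d; ring.
have d_le0 l : tight z l -> d l <= 0.
  move=> tl; have := ik_free l tl; rewrite /d.
  have [lt_ji|le_ij] := ltP (a l j) (a l i).
    have := ls_min l (introT andP (conj tl lt_ji)).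
    by rewrite /= /rho ler_pdivlMr ?subr_gt0 //; lra.
  have : a l i - a l j <= 0 by rewrite subr_le0.
  by move/(mulr_ge0_le0 rho_ge0); lra.
have [eta eta_gt0 dom_ray] := domR_ray Xrows dz d_le0.
have s_gt0 : 0 < eta / 2 by rewrite divr_gt0.
have dX := dom_ray (eta / 2) (ltW s_gt0) ltac:(lra).
have [e e_gt0 [exch|exch]] :=
  exchange_mix (mulr_ge0 (ltW s_gt0) rho_ge0) (ltW s_gt0)
    ltac:(have := mulr_ge0 (ltW s_gt0) rho_ge0; lra) dz dX.
- have [_ /domRP /(_ ls cls)] := domR_exchange exch dX dz.
  rewrite row_move rowls.
  have : 0 < e * (a ls i - a ls j) by rewrite mulr_gt0 ?subr_gt0.
  lra.
- have [/domRP /(_ ls cls) + _] := domR_exchange exch dX dz.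
  rewrite row_move Xrows rowls /d rhoE.
  have : 0 < e * (a ls k - a ls i) by rewrite mulr_gt0 ?subr_gt0.
  lra.
Qed.

Lemma common_max_slope z l0 : (forall l, tight z l -> a l i <= a l j) ->
  (forall l, tight z l -> a l i <= a l k) -> active z l0 ->
  exists l, [/\ active z l, forall l', active z l' -> slope i j l' <= slope i j l
    & forall l', active z l' -> slope i k l' <= slope i k l].
Proof.
move=> ij_free ik_free act0.
have [lu actu lu_max] := @arg_maxP _ _ _ l0 (active z) (slope i j) act0.
have [lv actv lv_max] := @arg_maxP _ _ _ l0 (active z) (slope i k) act0.
apply: contrapT => no_common.
have not_both l : active z l -> slope i j l = slope i j lu -> slope i k l < slope i k lv.
  move=> actl eq_u; have /= := lv_max l actl; rewrite le_eqVlt => /orP[/eqP eq_v|//].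
  by case: no_common; exists l; split=> // l' /[dup] /lu_max + /lv_max; rewrite ?eq_u ?eq_v.
have [p [q [p_gt0 q_gt0 [l1 [act1 l1_max] lt1] [l2 [act2 l2_max] lt2]]]] :=
  mixture_splits_argmax actu lu_max actv lv_max not_both.
pose d l := p * (a l i - a l j) + q * (a l i - a l k).
have Xrows : affine_rows z (fun s => mix z (s * p) (s * q)) d.
  by move=> s l; rewrite row_mix /d; ring.
have d_le0 l : tight z l -> d l <= 0.
  move=> tl; have : a l i - a l j <= 0 by rewrite subr_le0 ij_free.
  have : a l i - a l k <= 0 by rewrite subr_le0 ik_free.
  move=> /(mulr_ge0_le0 (ltW q_gt0)) + /(mulr_ge0_le0 (ltW p_gt0)); rewrite /d; lra.
have rate_d l : rate d l = p * slope i j l + q * slope i k l by rewrite /slope /rate /d; ring.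
have [eta1 eta1_gt0 ray1] :=
  active_ray Xrows d_le0 act1 ltac:(by move=> l actl; rewrite !rate_d l1_max).
have [eta2 eta2_gt0 ray2] :=
  active_ray Xrows d_le0 act2 ltac:(by move=> l actl; rewrite !rate_d l2_max).
have [s s_gt0 [s_lt1 s_lt2]] : exists2 s, 0 < s & s < eta1 /\ s < eta2.
  exists (Num.min eta1 eta2 / 2); first by rewrite divr_gt0 // lt_min eta1_gt0.
  have : 0 < Num.min eta1 eta2 by rewrite lt_min eta1_gt0.
  have : Num.min eta1 eta2 <= eta1 by rewrite ge_min lexx.
  have : Num.min eta1 eta2 <= eta2 by rewrite ge_min lexx orbT.
  lra.
have actX1 := ray1 s (ltW s_gt0) s_lt1; have actX2 := ray2 s (ltW s_gt0) s_lt2.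
have [e e_gt0 [exch|exch]] := exchange_mix (mulr_ge0 (ltW s_gt0) (ltW p_gt0))
  (mulr_ge0 (ltW s_gt0) (ltW q_gt0))
  ltac:(have := mulr_gt0 s_gt0 p_gt0; have := mulr_gt0 s_gt0 q_gt0; lra)
  (active_domR act0) (active_domR actX1).
- by have := exchange_slope_le actX1 actu e_gt0 exch; lra.
- by have := exchange_slope_le actX2 actv e_gt0 exch; lra.
Qed.

Lemma dirder_right_step y lam t0 : domR f y -> domR f (move y lam i k) ->
  0 <= t0 -> t0 < lam ->
  exists2 eta, 0 < eta & forall t, t0 < t -> t < t0 + eta ->
    (dirder f (move y t0 i k) i j <= dirder f (move y t i k) i j)%E.
Proof.
move=> dy dlam t0_ge0 t0_lt; set z := move y t0 i k.
have dz : domR f z by apply: domR_segment dy dlam _; rewrite t0_ge0 ltW.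
pose X s := move y (t0 + s) i k.
have Xrows : affine_rows z X (fun l => a l i - a l k).
  by move=> s l; rewrite !row_move; ring.
have Xt t : move y t i k = X (t - t0) by rewrite /X addrC subrK.
have ik_free l : tight z l -> a l i <= a l k.
  case/andP => /eqP cl0 /eqP rowl; have := (domRP _).1 dlam l cl0.
  rewrite Xt Xrows rowl => h; have : (lam - t0) * (a l i - a l k) <= 0 by lra.
  by rewrite pmulr_rle0 ?subr_gt0 // subr_le0.
have d_le0 l : tight z l -> a l i - a l k <= 0 by move/ik_free; rewrite subr_le0.
have [blocked|ij_free] := blockedP z i j.
  have [l tl [lt_ji eq_ik]] := blocked_parallel dz ik_free blocked.
  have [eta eta_gt0 dom_ray] := domR_ray Xrows dz d_le0.
  have tlX s : tight (X s) l.
    move: tl => /andP[cl0 /eqP rowl].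
    by rewrite /tight cl0 Xrows rowl eq_ik subrr mulr0 addr0 eqxx.
  exists eta => // t t_gt t_lt.
  by rewrite Xt (dirder_blocked (dom_ray _ _ _) (tlX _) lt_ji) ?leey //; lra.
have [l0 act0] := exists_active dz.
have [l [actl lij lik]] := common_max_slope ij_free ik_free act0.
have [eta eta_gt0 ray] := active_ray Xrows d_le0 actl lik.
exists eta => // t t_gt t_lt.
rewrite (dirder_max_slope ij_free actl lij) Xt.
by apply/slope_le_dirder/ray; lra.
Qed.

End Exchange.

End PolyhedralFunction.

Theorem mainTheorem15 (R : realType) (n : nat) (f : ('I_n -> R) -> \bar R)
  (y : 'I_n -> R) (i j k : 'I_n) :
  Mconvex f -> bounded_dom f -> domR f y ->
  i != j -> j != k -> i != k ->
  forall lambda : R, 0 < lambda -> domR f (move y lambda i k) ->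
    (dirder f y i j <= dirder f (move y lambda i k) i j)%E /\
    ((phiR f y < dirder f y i j)%E ->
       (phiR f y < dirder f (move y lambda i k) i j)%E).
Proof.
move=> [[f_neqNy [[m [a [c [b epi]]]] dom_neq0]] exch] _ dy ij _ ik lam lam_gt0 dlam.
have mono : (dirder f y i j <= dirder f (move y lam i k) i j)%E.
  have {1}-> : y = move y 0 i k by apply/funext => l; rewrite /move mul0r addr0.
  apply: (real_induction_le (D := fun t => dirder f (move y t i k) i j)) => // t0 t0_a t0_b.
    exact: (dirder_right_step f_neqNy epi dom_neq0 exch ij ik dy dlam).
  exact: (dirder_left_step f_neqNy epi dom_neq0 j dy dlam).
by split=> // lt; apply: lt_le_trans lt mono.
Qed.
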